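(* Let $q$ be a prime power, $t\ge1$, $s<t$ a nonnegative integer, and $W=\{0,w_1,\dots,w_{q^s-1}\}$ an $\mathbb{F}_q$-subspace of $\mathbb{F}_{q^t}$ of dimension $s$. Let $\alpha^*\in\mathbb{F}_{q^t}$, let $\{\beta_1,\dots,\beta_t\}$ be an arbitrary $\mathbb{F}_q$-basis of $\mathbb{F}_{q^t}$, and for $i=1,\dots,t$ let \[ g_i(x)=\beta_i\prod_{j=1}^{q^s-1}\Big(x-\big(\alpha^*-w_j^{-1}\beta_i\big)\Big). \] Then $\{g_1(\alpha^* ),\dots,g_t(\alpha^* )\}$ has rank $t$ over $\mathbb{F}_q$. *)

From HB Require Import structures.
From mathcomp Require Import all_boot all_order all_algebra all_field.
Set Implicit Arguments. Unset Strict Implicit. Unset Printing Implicit Defensive.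
Import GRing.Theory.
Local Open Scope ring_scope.

(* g_i(x) = beta_i * prod_{w in ws} (x - (alpha - w^{-1} beta_i)),
   where ws enumerates the nonzero elements w_1,...,w_{q^s-1} of W. *)
Definition gpoly (L : fieldType) (ws : seq L) (alpha b : L) : {poly L} :=
  b%:P * \prod_(w <- ws) ('X - (alpha - w^-1 * b)%:P).

(* Since alpha - (alpha - w^-1 b) = w^-1 b, evaluating g_i at alpha gives
   g_i(alpha) = c * beta_i^(q^s) with c = prod_j w_j^-1 != 0, because W has
   q^s - 1 nonzero elements.  The map x |-> c * x^(q^s) is an injective
   F_q-linear endomorphism of F_(q^t) (a power of Frobenius followed by a
   multiplication), so it sends the basis beta to a basis. *)
From HB Require Import structures.
From mathcomp Require Import all_boot all_order all_algebra all_field.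
Set Implicit Arguments. Unset Strict Implicit. Unset Printing Implicit Defensive.
Import GRing.Theory.
Local Open Scope ring_scope.

Lemma dim_span_lker0 (K : fieldType) (aT rT : vectType K) (f : 'Hom(aT, rT))
    (X : seq aT) :
  lker f == 0%VS -> \dim <<map f X>> = \dim <<X>>.
Proof. by move=> /eqP f0; rewrite -limg_span limg_dim_eq // f0 capv0. Qed.

(* Stated for F-algebras because the finite vector structure of [finvect_type]
   on a mere vectType is over F as a finNzRingType, which {vspace _} does not
   unify with; the falgType instance is over F itself. *)
Lemma size_nonzero_enum_vspace (F : finFieldType) (aT : falgType F)
    (W : {vspace aT}) (ws : seq aT) :
  uniq ws -> 0 \notin ws -> (forall x, (x \in W) = (x == 0) || (x \in ws)) ->
  (size ws).+1 = (#|F| ^ \dim W)%N.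
Proof.
move=> uws ws0 Wws; pose faT := finvect_type aT.
rewrite -(card_vspace (W : {vspace faT})).
have -> : #|(W : {vspace faT})| = #|(0 : faT) :: (ws : seq faT)|.
  by apply: eq_card => x; rewrite !inE Wws.
by apply/esym/card_uniqP; rewrite /= ws0.
Qed.

Section FrobeniusPower.
Variables (F : finFieldType) (L : fieldExtType F) (k : nat).

Definition frobn (x : L) : L := x ^+ (#|F| ^ k).

Lemma frobn_is_zmod_morphism : zmod_morphism frobn.
Proof.
have [p _ pcharF] := finPcharP F.
have pcharL : p \in [pchar L] by rewrite pchar_lalg.
move=> x y; rewrite /frobn (card_pprimeChar pcharF) -expnM.
elim: (_ * k)%N => [|n IHn]; first by rewrite !expr1.
by rewrite expnSr !exprM IHn -!(pFrobenius_autE pcharL) rmorphB.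
Qed.

Lemma frobn_is_scalable : scalable frobn.
Proof.
move=> a x; rewrite /frobn -[a *: x]mulr_algl exprMn -(rmorphXn (in_alg L)) /=.
rewrite mulr_algl.
suff -> : a ^+ (#|F| ^ k) = a by [].
by elim: k => [|n IHn]; rewrite ?expr1 // expnSr exprM IHn expf_card.
Qed.

HB.instance Definition _ :=
  GRing.isZmodMorphism.Build L L frobn frobn_is_zmod_morphism.
HB.instance Definition _ :=
  GRing.isScalable.Build F L L *:%R frobn frobn_is_scalable.

Lemma lker0_frobn : lker (linfun frobn) == 0%VS.
Proof.
rewrite -subv0; apply/subvP => x; rewrite memv_ker lfunE memv0 /= /frobn.
by rewrite expf_eq0 => /andP[_].
Qed.

End FrobeniusPower.

Lemma horner_gpoly (L : fieldType) (ws : seq L) (alpha b : L) :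
  (gpoly ws alpha b).[alpha] = (\prod_(w <- ws) w^-1) * b ^+ (size ws).+1.
Proof.
rewrite /gpoly hornerM hornerC horner_prod.
rewrite (eq_bigr (fun w => w^-1 * b)) => [|w _]; last first.
  by rewrite !hornerE opprB addrC subrK.
by rewrite big_split /= big_const_seq count_predT iter_mulr_1 exprS mulrCA.
Qed.

Theorem lemma4 (F : finFieldType) (L : fieldExtType F) (t s : nat)
  (W : {vspace L}) (ws : seq L) (alpha : L) (beta : t.-tuple L) :
  \dim {:L} = t -> (1 <= t)%N -> (s < t)%N -> \dim W = s ->
  uniq ws -> 0 \notin ws ->
  (forall x : L, (x \in W) = (x == 0) || (x \in ws)) ->
  basis_of {:L} beta ->
  \dim <<[seq (gpoly ws alpha b).[alpha] | b <- beta]>>%VS = t.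
Proof.
move=> dimL _ _ dimW uws ws0 Wws /andP[/eqP span_beta _].
set c := \prod_(w <- ws) w^-1.
have c_unit : c \is a GRing.unit.
  rewrite unitfE prodf_seq_neq0; apply/allP => w w_ws /=.
  by rewrite invr_eq0; apply: contraNneq ws0 => <-.
have -> : [seq (gpoly ws alpha b).[alpha] | b <- beta]
          = map (amull c) (map (linfun (@frobn _ L s)) beta).
  rewrite -map_comp; apply: eq_map => b /=.
  by rewrite horner_gpoly (size_nonzero_enum_vspace uws ws0 Wws) dimW 2!lfunE.
rewrite dim_span_lker0 ?lker0_amull // dim_span_lker0 ?lker0_frobn //.
by rewrite span_beta.
Qed.
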